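(* There exists an absolute constant $c>0$ such that for every $n$ and every convex body $K$ of volume $1$ in $\mathbb{R}^n$, $$\int_K\varphi_{\mu_K}(x)\,dx\geq e^{-cn},$$ where $\mu_K$ is the uniform (Lebesgue) probability measure on $K$.
   Context: A convex body is a compact convex set with non-empty interior. $\varphi_\mu(x)=\inf\{\mu(H): H$ a half-space of $\mathbb{R}^n$ containing $x\}$ (Tukey's half-space depth). *)

From HB Require Import structures.
From mathcomp Require Import all_boot all_order all_algebra.
From mathcomp Require Import all_classical all_reals all_analysis.

Set Implicit Arguments.
Unset Strict Implicit.
Unset Printing Implicit Defensive.

Import Order.TTheory GRing.Theory Num.Theory.
Import numFieldNormedType.Exports.

Local Open Scope classical_set_scope.
Local Open Scope ring_scope.

Section Defs.
Context {R : realType}.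

(** Lebesgue measure on R^n, realised on [n.-tuple R] (which carries the
    product Borel sigma-algebra generated by the coordinate projections,
    see measurable_structure.v) as the iterated product of the Lebesgue
    measure on R (Tonelli):
      leb_tuple 0 A     = Dirac mass at the unique point of R^0,
      leb_tuple (m+1) A = \int_R leb_tuple m {t | (x :: t) \in A} dx. *)
Fixpoint leb_tuple (n : nat) : set (n.-tuple R) -> \bar R :=
  match n return set (n.-tuple R) -> \bar R with
  | 0 => fun A => (\1_A [tuple] : R)%:E
  | m.+1 => fun A =>
      (\int[@lebesgue_measure R]_x leb_tuple [set t | A (cons_tuple x t)])%E
  end.

Definition row_of_tuple (n : nat) (t : n.-tuple R) : 'rV[R]_n :=
  \row_i tnth t i.

Definition vol (n : nat) (A : set 'rV[R]_n) : \bar R :=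
  leb_tuple (@row_of_tuple n @^-1` A).

Definition leb_integral (n : nat) (D : set 'rV[R]_n) (f : 'rV[R]_n -> \bar R)
  : \bar R :=
  (\int[@leb_tuple n]_(t in @row_of_tuple n @^-1` D) f (row_of_tuple t))%E.

Definition dotr (n : nat) (a x : 'rV[R]_n) : R := \sum_i a 0 i * x 0 i.

Definition convex (n : nat) (K : set 'rV[R]_n) : Prop :=
  forall x y (t : R), K x -> K y -> 0 <= t -> t <= 1 ->
    K ((1 - t) *: x + t *: y).

Definition convex_body (n : nat) (K : set 'rV[R]_n) : Prop :=
  convex K /\ compact K /\ (interior K !=set0).

Definition halfspace (n : nat) (H : set 'rV[R]_n) : Prop :=
  exists (a : 'rV[R]_n) (b : R), a != 0 /\ H = [set y | dotr a y <= b].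

(** Tukey's half-space depth of x with respect to a measure mu. *)
Definition tukey_depth (n : nat) (mu : set 'rV[R]_n -> \bar R) (x : 'rV[R]_n)
  : \bar R :=
  ereal_inf [set mu H | H in [set H | halfspace H /\ H x]].

Definition uniform_on (n : nat) (K : set 'rV[R]_n) : set 'rV[R]_n -> \bar R :=
  fun A => (vol (K `&` A) * ((fine (vol K))^-1)%:E)%E.

End Defs.

From HB Require Import structures.
From mathcomp Require Import all_boot all_order all_algebra.
From mathcomp Require Import all_classical all_reals all_analysis.
From mathcomp Require Import measurable_realfun lra.
Import Order.TTheory GRing.Theory Num.Theory.
Import numFieldNormedType.Exports.
Local Open Scope classical_set_scope.
Local Open Scope ring_scope.
Set Implicit Arguments.
Unset Strict Implicit.
Unset Printing Implicit Defensive.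

(* For x in K the set C(x) = K ∩ (2x - K) is centrally symmetric about x, so
   the point reflection through x maps the part of C(x) beyond any hyperplane
   through x into the other side: every closed half-space containing x carries
   at least half of vol C(x), and the depth of x is at least vol C(x) / 2.
   By Fubini, the integral of vol C(x) over K is the volume of
   {(x, y) | x, y, 2x - y ∈ K}; by convexity its section at y ∈ K is the whole
   homothetic copy (K + y) / 2, of volume 2^-n vol K.  Hence the integral of
   the depth is at least 2^-(n+1) >= e^(-2n). *)

Section sigma_finite_measures.
Local Open Scope ereal_scope.
Context d1 d2 (T1 : measurableType d1) (T2 : measurableType d2) (R : realType).

(* The library's canonical sigma-finite instance on [m1 \x m2] is superseded
   by the one for products of subprobabilities, hence this lemma. *)
Lemma sigma_finite_product (m1 : {sigma_finite_measure set T1 -> \bar R})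
    (m2 : {sigma_finite_measure set T2 -> \bar R}) :
  sigma_finite setT (m1 \x m2).
Proof.
have /sigma_finiteP[F [FT ndF Ffin]] := sigma_finiteT m1.
have /sigma_finiteP[G [GT ndG Gfin]] := sigma_finiteT m2.
exists (fun k => F k `*` G k).
  apply/esym/seteqP; split => // -[x y] _.
  have [i _ Fix] : (\bigcup_k F k) x by rewrite -FT.
  have [j _ Gjy] : (\bigcup_k G k) y by rewrite -GT.
  exists (maxn i j) => //; split.
  - exact: subsetPset (ndF _ _ (leq_maxl i j)) _ Fix.
  - exact: subsetPset (ndG _ _ (leq_maxr i j)) _ Gjy.
move=> k; have [mF Ffink] := Ffin k; have [mG Gfink] := Gfin k.
split; first exact: measurableX.
by rewrite product_measure1E // lte_mul_pinfty // ge0_fin_numE.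
Qed.

Lemma sigma_finite_pushforward (mu : set T1 -> \bar R) (f : T1 -> T2)
    (g : T2 -> T1) :
  measurable_fun setT g -> cancel f g ->
  sigma_finite setT mu -> sigma_finite setT (pushforward mu f).
Proof.
move=> mg fK [F FT Ffin].
exists (fun k => g @^-1` F k); first by rewrite -preimage_bigcup -FT.
move=> k; have [mF FkT] := Ffin k; split.
  by rewrite -[_ @^-1` _]setTI; exact: mg.
by rewrite /pushforward -comp_preimage (_ : g \o f = id) //; exact/funext/fK.
Qed.

Lemma integral_measure_xsection (m1 : {sigma_finite_measure set T1 -> \bar R})
    (m2 : {sigma_finite_measure set T2 -> \bar R}) (A : set (T1 * T2)) :
  measurable A ->
  \int[m1]_x m2 (xsection A x) = \int[m2]_y m1 (ysection A y).
Proof.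
move=> mA; have := indic_fubini_tonelli m1 m2 mA.
by rewrite indic_fubini_tonelli_FE // indic_fubini_tonelli_GE.
Qed.

End sigma_finite_measures.

Lemma ge0_le_integral_nonmeasurable d (T : measurableType d) (R : realType)
    (mu : {measure set T -> \bar R}) (D : set T) (f g : T -> \bar R) :
  (forall x, D x -> 0 <= f x)%E -> (forall x, D x -> f x <= g x)%E ->
  (\int[mu]_(x in D) f x <= \int[mu]_(x in D) g x)%E.
Proof.
move=> f0 fg; have g0 x : D x -> (0 <= g x)%E.
  by move=> Dx; exact: le_trans (f0 _ Dx) (fg _ Dx).
rewrite !ge0_integralE //; apply: ereal_sup_le => _ [h hf <-]; exists h => // x.
apply: le_trans (hf x) _; rewrite /patch; case: ifPn => // /set_mem Dx.
exact: fg.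
Qed.

Lemma lee_half {R : realType} (c x : \bar R) :
  (0 <= x -> c <= x + x -> c * (2^-1)%:E <= x)%E.
Proof.
case: x => [r| |] //; last by move=> _ _; exact: leey.
case: c => [s| |] //.
- by rewrite lee_fin => r0; rewrite -EFinD -EFinM !lee_fin => h; lra.
- by move=> _ _; rewrite mulNyr gtr0_sg ?invr_gt0 // mul1e leNye.
Qed.

Lemma expR_le_halfX {R : realType} (n : nat) : (0 < n)%N ->
  expR (- (2 * n%:R)) <= 2^-1 ^+ n.+1 :> R.
Proof.
move=> n_gt0; have e1 : 2 <= expR 1 :> R by have := expR_ge1Dx (1 : R).
have e2 : (expR 2)^-1 <= 2^-1 * 2^-1 :> R.
  rewrite -invfM lef_pV2 ?posrE ?expR_gt0 //.
  by rewrite [in expR _](_ : 2 = 1 + 1) // expRD; nra.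
rewrite -mulNr mulrC expRM_natl expRN.
apply: le_trans (lerXn2r _ _ _ e2) _; rewrite ?nnegrE ?invr_ge0 ?expR_ge0 //.
rewrite exprMn exprS mulrC ler_pM2r ?exprn_gt0 ?invr_gt0 //.
case: n n_gt0 => // n _; rewrite exprS ler_piMr ?invr_ge0 //.
by rewrite exprn_ile1 ?invr_ge0 ?invf_le1 //; lra.
Qed.

Section lebesgue_tuple.
Local Open Scope ereal_scope.
Context {R : realType}.

(* Typed on the carrier of [lebesgue_measure], so that its [mfun] instance
   below discharges the measurability condition of the pushforward measure of
   [lebesgue_measure \x M] along it. *)
Definition tuple_cons n (p : measurableTypeR R * n.-tuple R) : n.+1.-tuple R :=
  cons_tuple p.1 p.2.
Definition tuple_uncons n (t : n.+1.-tuple R) :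
    measurableTypeR R * n.-tuple R :=
  (thead t, [tuple of behead t]).

Lemma measurable_tuple_cons n : measurable_fun setT (@tuple_cons n).
Proof. exact: measurable_cons. Qed.

HB.instance Definition _ n := isMeasurableFun.Build _ _ _ _ (@tuple_cons n)
  (@measurable_tuple_cons n).

Lemma measurable_tuple_uncons n : measurable_fun setT (@tuple_uncons n).
Proof.
exact: measurable_fun_pair (measurable_tnth _) (@measurable_behead _ _ _).
Qed.

Lemma tuple_consK n : cancel (@tuple_cons n) (@tuple_uncons n).
Proof. by move=> [x t]; congr pair; exact: val_inj. Qed.

Section lebesgue_tuple_succ.
Variables (n : nat) (M : {sigma_finite_measure set (n.-tuple R) -> \bar R}).

Definition lebesgue_tuple_succ :=
  pushforward (@lebesgue_measure R \x M) (@tuple_cons n).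

Let lebesgue_tuple_succ0 : lebesgue_tuple_succ set0 = 0.
Proof. exact: measure0. Qed.

Let lebesgue_tuple_succ_ge0 A : 0 <= lebesgue_tuple_succ A.
Proof. exact: measure_ge0. Qed.

Let lebesgue_tuple_succ_sigma_additive :
  semi_sigma_additive lebesgue_tuple_succ.
Proof. exact: measure_semi_sigma_additive. Qed.

HB.instance Definition _ := isMeasure.Build _ _ _ lebesgue_tuple_succ
  lebesgue_tuple_succ0 lebesgue_tuple_succ_ge0
  lebesgue_tuple_succ_sigma_additive.

Let lebesgue_tuple_succ_sigma_finite : sigma_finite setT lebesgue_tuple_succ.
Proof.
apply: sigma_finite_pushforward (@measurable_tuple_uncons n) (@tuple_consK n) _.
exact: sigma_finite_product.
Qed.

HB.instance Definition _ := Measure_isSigmaFinite.Build _ _ _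
  lebesgue_tuple_succ lebesgue_tuple_succ_sigma_finite.

End lebesgue_tuple_succ.

Fixpoint lebesgue_tuple n : {sigma_finite_measure set (n.-tuple R) -> \bar R} :=
  if n is m.+1 then lebesgue_tuple_succ (lebesgue_tuple m) else \d_[tuple].

Lemma lebesgue_tupleS n A : lebesgue_tuple n.+1 A =
  \int[@lebesgue_measure R]_x lebesgue_tuple n [set t | A (cons_tuple x t)].
Proof.
apply: eq_integral => x _; congr (lebesgue_tuple n _).
by apply/seteqP; split => t; rewrite /xsection /= inE.
Qed.

Lemma lebesgue_tupleE n A : lebesgue_tuple n A = leb_tuple A.
Proof.
elim: n A => [//|n IH] A; rewrite lebesgue_tupleS.
by apply: eq_integral => x _; rewrite IH.
Qed.

End lebesgue_tuple.

Section lebesgue_affine.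
Local Open Scope ereal_scope.
Context {R : realType}.
Implicit Types (c s : R) (A : set R).

Definition affine c s (x : R) : R := c + s * x.

Lemma measurable_affine c s : measurable_fun setT (affine c s).
Proof. exact: measurable_funD. Qed.

Lemma affine_preimage_itv_oc c s a b : (0 < s)%R ->
  affine c s @^-1` `]a, b]%classic =
  `]((a - c) / s)%R, ((b - c) / s)%R]%classic.
Proof.
move=> s0; apply/seteqP; split => x; rewrite /= !in_itv /= /affine;
  by rewrite ltr_pdivrMr // ler_pdivlMr // ltrBlDl lerBrDl ![(x * s)%R]mulrC.
Qed.

Let lebesgue_affine_pos c s A : (0 < s)%R -> measurable A ->
  lebesgue_measure A = s%:E * lebesgue_measure (affine c s @^-1` A).
Proof.
move=> s0; have s_ge0 : (0 <= s)%R by exact: ltW.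
apply: (@lebesgue_measure_unique R (mscale (NngNum s_ge0)
  (pushforward lebesgue_measure (affine c s : _ -> measurableTypeR R)))).
  exact: measurable_affine.
move=> mf _ [[a b] _ <-] /=.
change (lebesgue_measure `]a, b]%classic =
  s%:E * lebesgue_measure (affine c s @^-1` `]a, b]%classic)).
rewrite affine_preimage_itv_oc //.
rewrite !lebesgue_measure_itv /= !lte_fin ltr_pM2r ?invr_gt0 // ltrD2r.
case: ifPn => ab; last by rewrite mule0.
rewrite -EFinD -EFinM; congr (_%:E).
by rewrite -mulrBl mulrCA divff ?mulr1 ?gt_eqF // opprB addrA subrK.
Qed.

Lemma lebesgue_measure_affine c s A : s != 0%R -> measurable A ->
  lebesgue_measure (affine c s @^-1` A) = (`|s|^-1)%:E * lebesgue_measure A.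
Proof.
move=> s0 mA; suff pos t : (0 < t)%R ->
    lebesgue_measure (affine c t @^-1` A) = (`|t|^-1)%:E * lebesgue_measure A.
  have [s_lt0|s_gt0|s_eq0] := ltgtP s 0%R; last by rewrite s_eq0 eqxx in s0.
    rewrite -normrN -pos ?oppr_gt0 // -lebesgue_measureN; last first.
      by rewrite -[_ @^-1` _]setTI; exact: measurable_affine.
    congr lebesgue_measure; apply/seteqP.
    by split => x; rewrite /= /affine mulrN mulNr.
  exact: pos.
move=> t0; rewrite (lebesgue_affine_pos c t0 mA) muleA -EFinM gtr0_norm //.
by rewrite mulVf ?gt_eqF // mul1e.
Qed.

Lemma ge0_integral_affine c s (h : R -> \bar R) : s != 0%R ->
  measurable_fun setT h -> (forall x, 0 <= h x) ->
  \int[lebesgue_measure]_x h (affine c s x) =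
  (`|s|^-1)%:E * \int[lebesgue_measure]_x h x.
Proof.
move=> s0 mh h0; have s_ge0 : (0 <= `|s|^-1)%R by rewrite invr_ge0.
have maff := measurable_affine c s.
transitivity (\int[pushforward lebesgue_measure
  (affine c s : _ -> measurableTypeR R)]_x h x).
  by rewrite ge0_integral_pushforward.
rewrite -[RHS](ge0_integral_mscale _ measurableT (NngNum s_ge0)) //.
by apply: eq_measure_integral => A mA _; exact: lebesgue_measure_affine.
Qed.

End lebesgue_affine.

Section lebesgue_tuple_affine.
Local Open Scope ereal_scope.
Context {R : realType}.

Definition tuple_affine n (c : n.-tuple R) (s : R) (t : n.-tuple R) :
  n.-tuple R := [tuple affine (tnth c i) s (tnth t i) | i < n].

Lemma measurable_tuple_affine n (c : n.-tuple R) s :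
  measurable_fun setT (tuple_affine c s).
Proof.
apply/measurable_fun_tnthP => i.
rewrite (_ : _ \o _ = affine (tnth c i) s \o (@tnth n R)^~ i).
  exact: measurableT_comp (measurable_affine _ _) (measurable_tnth _).
by apply/funext => t /=; rewrite tnth_mktuple.
Qed.

Lemma tuple_affine_cons n (c : n.+1.-tuple R) s x t :
  tuple_affine c s (cons_tuple x t) =
  cons_tuple (affine (thead c) s x) (tuple_affine [tuple of behead c] s t).
Proof.
case/tupleP: c => c0 c; apply: eq_from_tnth => i; rewrite tnth_mktuple.
case: (unliftP ord0 i) => [j ->|->]; rewrite ?tnthS ?tnth0 //.
by rewrite tnth_mktuple !(tnth_nth 0%R).
Qed.

Lemma lebesgue_tuple_affine n (c : n.-tuple R) s A : s != 0%R -> measurable A ->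
  lebesgue_tuple n (tuple_affine c s @^-1` A) =
  (`|s|^-1 ^+ n)%:E * lebesgue_tuple n A.
Proof.
move=> s0; elim: n c A => [|n IH] c A mA.
  have -> : tuple_affine c s = id.
    by apply/funext => t; rewrite /= [LHS]tuple0 [RHS]tuple0.
  by rewrite preimage_id expr0 mul1e.
pose B x := [set t | A (cons_tuple x t)].
have BE : B = xsection (@tuple_cons R n @^-1` A).
  by apply/funext => x; apply/seteqP; split => t; rewrite /xsection /= inE.
have mA' : measurable (@tuple_cons R n @^-1` A).
  by rewrite -[_ @^-1` _]setTI; exact: measurable_tuple_cons.
have mB x : measurable (B x) by rewrite BE; exact: measurable_xsection.
have mlebB : measurable_fun setT (fun x => lebesgue_tuple n (B x)).
  by rewrite BE; exact: measurable_fun_xsection.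
have sectionE x : [set t | (tuple_affine c s @^-1` A) (cons_tuple x t)] =
    tuple_affine [tuple of behead c] s @^-1` B (affine (thead c) s x).
  by apply/seteqP; split => t; rewrite /= tuple_affine_cons.
rewrite !lebesgue_tupleS.
under eq_integral do rewrite sectionE IH //.
rewrite ge0_integralZl_EFin //; last first.
  exact: measurableT_comp mlebB (measurable_affine _ _).
rewrite (ge0_integral_affine _ _ (h := fun x => lebesgue_tuple n (B x))) //.
by rewrite muleA -EFinM exprSr.
Qed.

End lebesgue_tuple_affine.

Section measurable_closed.
Context {R : realType} (n : nat).
Local Notation row := (@row_of_tuple R n).

Definition rat_box (q : n.-tuple rat) (k : nat) : set (n.-tuple R) :=
  [set t | forall i, `|tnth t i - ratr (tnth q i)| < k.+1%:R^-1].

Lemma measurable_rat_box q k : measurable (rat_box q k).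
Proof.
have -> : rat_box q k = \bigcap_(i in [set: 'I_n])
    (fun t => `|tnth t i - ratr (tnth q i)|) @^-1` `]-oo, k.+1%:R^-1[.
  by apply/seteqP; split => t /= tq i => [_|]; rewrite ?in_itv /=; exact: tq.
apply: fin_bigcap_measurable => // i _; rewrite -[X in measurable X]setTI.
have mdist : measurable_fun setT
    (fun t : n.-tuple R => `|tnth t i - ratr (tnth q i)|).
  apply: measurableT_comp => //.
  exact: measurable_funB (measurable_tnth i) (measurable_cst _).
exact: mdist.
Qed.

Lemma rat_box_in_open (U : set 'rV[R]_n) (t : n.-tuple R) :
  open U -> U (row t) ->
  exists q k, rat_box q k t /\ rat_box q k `<=` row @^-1` U.
Proof.
rewrite openE => /[apply] /nbhs_ballP [e e_gt0 eU].
pose k := Num.trunc (2 / e).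
have ke : k.+1%:R^-1 < e / 2.
  by rewrite -[e / 2]invf_div ltf_pV2 ?posrE ?divr_gt0 // truncnS_gt.
have qi i : exists q : rat,
    ratr q \in `](tnth t i - k.+1%:R^-1), (tnth t i + k.+1%:R^-1)[.
  by apply: rat_in_itvoo; rewrite ltrBlDr -addrA ltrDl -mulr2n mulrn_wgt0.
pose q : n.-tuple rat := [tuple xchoose (qi i) | i < n].
have tq : rat_box q k t.
  move=> i; rewrite tnth_mktuple; have := xchooseP (qi i).
  by rewrite in_itv /= -ltr_distlC distrC.
exists q, k; split => // u qu; apply: eU; split => // i j.
rewrite /ball /= !mxE.
rewrite (le_lt_trans (ler_distD (ratr (tnth q j)) _ _)) //.
apply: (lt_le_trans (ltrD (tq j) _)); first by rewrite distrC; exact: qu.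
by rewrite [leRHS]splitr ltW // ltrD.
Qed.

(* Tuples carry the product sigma-algebra, so the open complement of K is
   written as a countable union of rational boxes. *)
Lemma measurable_closed_preimage (K : set 'rV[R]_n) : closed K ->
  measurable (row @^-1` K).
Proof.
move=> cK; rewrite -[_ @^-1` K]setCK; apply: measurableC.
have -> : ~` (row @^-1` K) = \bigcup_(qk in
    [set qk | rat_box qk.1 qk.2 `<=` ~` (row @^-1` K)]) rat_box qk.1 qk.2.
  apply/seteqP; split => [t Kt|t [qk /= qkK]]; last exact: qkK.
  have [q [k [tq qK]]] := rat_box_in_open (closed_openC cK) Kt.
  by exists (q, k).
rewrite bigcup_mkcond; apply: countable_bigcupT_measurable => // qk.
by case: ifPn => // _; exact: measurable_rat_box.
Qed.

End measurable_closed.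

Section point_reflection.
Context {R : realType} (n : nat).
Local Notation row := (@row_of_tuple R n).
Implicit Types (x y : n.-tuple R) (a : 'rV[R]_n).

Definition point_reflect x y : n.-tuple R :=
  [tuple 2 * tnth x i - tnth y i | i < n].

Lemma point_reflectK x : involutive (point_reflect x).
Proof.
by move=> y; apply: eq_from_tnth => i; rewrite !tnth_mktuple opprB addrC subrK.
Qed.

Lemma point_reflect_affine x :
  point_reflect x = tuple_affine [tuple 2 * tnth x i | i < n] (-1).
Proof.
apply/funext => y; apply: eq_from_tnth => i.
by rewrite !tnth_mktuple /affine mulN1r.
Qed.

Lemma point_reflect_affine_center y :
  point_reflect^~ y = tuple_affine [tuple - tnth y i | i < n] 2.
Proof.
apply/funext => x; apply: eq_from_tnth => i.
by rewrite !tnth_mktuple /affine addrC.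
Qed.

Lemma measurable_point_reflect x : measurable_fun setT (point_reflect x).
Proof. by rewrite point_reflect_affine; exact: measurable_tuple_affine. Qed.

Lemma measurable_point_reflect_pair :
  measurable_fun setT
    (fun p : n.-tuple R * n.-tuple R => point_reflect p.1 p.2).
Proof.
apply/measurable_fun_tnthP => i.
rewrite (_ : _ \o _ = fun p => 2 * tnth p.1 i - tnth p.2 i); last first.
  by apply/funext => p /=; rewrite tnth_mktuple.
apply: measurable_funB; first apply: measurable_funM => //.
  exact: measurableT_comp (measurable_tnth i) measurable_fst.
exact: measurableT_comp (measurable_tnth i) measurable_snd.
Qed.

Lemma row_midpoint x y :
  row x = (1 - 2^-1) *: row y + 2^-1 *: row (point_reflect x y).
Proof.
apply/rowP => i; rewrite !mxE tnth_mktuple mulrBr mulrA mulVf ?pnatr_eq0 //.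
by rewrite mul1r; lra.
Qed.

Lemma dotr_point_reflect a x y :
  dotr a (row (point_reflect x y)) = 2 * dotr a (row x) - dotr a (row y).
Proof.
rewrite /dotr mulr_sumr -sumrB; apply: eq_bigr => i _.
by rewrite !mxE tnth_mktuple mulrBr mulrCA.
Qed.

Lemma measurable_dotr a : measurable_fun setT (fun t => dotr a (row t)).
Proof.
apply: measurable_sum => i; apply: measurable_funM => //.
rewrite (_ : (fun t => _) = (@tnth n R)^~ i); first exact: measurable_tnth.
by apply/funext => t; rewrite mxE.
Qed.

Lemma measurable_dotr_le a (b : R) : measurable [set t | dotr a (row t) <= b].
Proof.
have -> : [set t | dotr a (row t) <= b] =
    (fun t => dotr a (row t)) @^-1` `]-oo, b].
  by apply/seteqP; split => t; rewrite /= in_itv.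
by rewrite -[_ @^-1` _]setTI; exact: measurable_dotr.
Qed.

Lemma lebesgue_tuple_point_reflect x A : measurable A ->
  lebesgue_tuple n (point_reflect x @^-1` A) = lebesgue_tuple n A.
Proof.
move=> mA; rewrite point_reflect_affine lebesgue_tuple_affine ?oppr_eq0 //.
by rewrite normrN normr1 invr1 expr1n mul1e.
Qed.

End point_reflection.

Section symmetric_halving.
Local Open Scope ereal_scope.
Context {R : realType} (n : nat).
Local Notation row := (@row_of_tuple R n).
Local Notation leb := (lebesgue_tuple n).

Lemma lebesgue_tuple_halfspace_symmetric (C : set (n.-tuple R)) x a :
  measurable C -> (forall y, C y -> C (point_reflect x y)) ->
  leb C * (2^-1)%:E <=
  leb (C `&` [set y | (dotr a (row y) <= dotr a (row x))%R]).
Proof.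
move=> mC Csym; set H := [set y | _].
have mH : measurable H by exact: measurable_dotr_le.
have reflect_sub : point_reflect x @^-1` (C `\` H) `<=` C `&` H.
  move=> y [/Csym]; rewrite /H /= point_reflectK dotr_point_reflect => Cy.
  by move/negP; rewrite -ltNge => ?; split => //; lra.
apply: lee_half; first exact: measure_ge0.
rewrite (measureDI _ mC mH) addeC leeD2l //.
apply: (@le_trans _ _ (leb (point_reflect x @^-1` (C `\` H)))).
  by rewrite lebesgue_tuple_point_reflect //; exact: measurableD.
apply: le_measure reflect_sub; rewrite inE; last exact: measurableI.
rewrite -[_ @^-1` _]setTI; apply: measurable_point_reflect => //.
exact: measurableD.
Qed.

End symmetric_halving.

Section symmetric_part.
Local Open Scope ereal_scope.
Context {R : realType} (n : nat) (K : set 'rV[R]_n).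
Local Notation row := (@row_of_tuple R n).
Local Notation leb := (lebesgue_tuple n).
Local Notation Kt := (row @^-1` K).

Definition symmetric_part (x : n.-tuple R) : set (n.-tuple R) :=
  [set y | Kt y /\ Kt (point_reflect x y)].

Lemma measurable_symmetric_part x : measurable Kt ->
  measurable (symmetric_part x).
Proof.
move=> mK; apply: measurableI => //; rewrite -[X in measurable X]setTI.
exact: measurable_point_reflect.
Qed.

Lemma tukey_depth_ge_symmetric_part x : measurable Kt -> vol K = 1 ->
  leb (symmetric_part x) * (2^-1)%:E <= tukey_depth (uniform_on K) (row x).
Proof.
move=> mK volK; apply: le_ereal_inf_tmp => _ [H [[a [b [_ ->]]] /= xb] <-].
rewrite /uniform_on volK invr1 mule1 /vol -lebesgue_tupleE.
apply: le_trans (lebesgue_tuple_halfspace_symmetric (x := x) a _ _) _.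
- exact: measurable_symmetric_part.
- by move=> y [Ky Kry]; split; rewrite ?point_reflectK.
apply: le_measure; rewrite ?inE.
- apply: measurableI; first exact: measurable_symmetric_part.
  exact: measurable_dotr_le.
- exact: measurableI mK (measurable_dotr_le _ _).
- by move=> y [[Ky _] ay]; split => //=; apply: le_trans xb.
Qed.

(* Its section at x is [symmetric_part x] (for x in K); its section at y in K
   is the copy (K + y) / 2 of K, contained in K by convexity. *)
Definition reflection_pairs : set (n.-tuple R * n.-tuple R) :=
  (Kt `*` Kt) `&` ((fun p => point_reflect p.1 p.2) @^-1` Kt).

Lemma measurable_reflection_pairs :
  measurable Kt -> measurable reflection_pairs.
Proof.
move=> mK; apply: measurableI; first exact: measurableX.
by rewrite -[X in measurable X]setTI; exact: measurable_point_reflect_pair.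
Qed.

Lemma lebesgue_tuple_xsection_reflection_pairs x :
  leb (xsection reflection_pairs x) =
  ((fun x => leb (symmetric_part x)) \_ Kt) x.
Proof.
rewrite patchE; case: ifPn => [/set_mem Kx|]; last rewrite notin_setE => Kx.
  suff -> : xsection reflection_pairs x = symmetric_part x by [].
  by apply/seteqP; split => y; rewrite /xsection /= inE => -[] // [].
suff -> : xsection reflection_pairs x = set0 by rewrite measure0.
by apply/seteqP; split => y //; rewrite /xsection /= inE => -[[/Kx]].
Qed.

Lemma lebesgue_tuple_ysection_reflection_pairs y : convex K -> measurable Kt ->
  leb (ysection reflection_pairs y) = ((fun=> (2^-1 ^+ n)%:E * leb Kt) \_ Kt) y.
Proof.
move=> cK mK; rewrite patchE; case: ifPn => [/set_mem Ky|]; last first.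
  rewrite notin_setE => Ky; suff -> : ysection reflection_pairs y = set0.
    by rewrite measure0.
  by apply/seteqP; split => x //; rewrite /ysection /= inE => -[[_ /Ky]].
suff -> : ysection reflection_pairs y = (fun x => point_reflect x y) @^-1` Kt.
  by rewrite point_reflect_affine_center lebesgue_tuple_affine // ger0_norm.
apply/seteqP; split => x; rewrite /ysection /= inE; first by case.
move=> Kr; split => //; split => //=.
by rewrite (row_midpoint x y); apply: cK => //; lra.
Qed.

Lemma measurable_fun_symmetric_part : measurable Kt ->
  measurable_fun Kt (fun x => leb (symmetric_part x)).
Proof.
move=> mK; apply/(measurable_restrictT _ mK).
rewrite (_ : _ \_ _ = fun x => leb (xsection reflection_pairs x)).
  exact: measurable_fun_xsection (measurable_reflection_pairs mK).
by apply/funext => x; rewrite lebesgue_tuple_xsection_reflection_pairs.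
Qed.

Lemma integral_symmetric_part : convex K -> measurable Kt ->
  \int[leb]_(x in Kt) leb (symmetric_part x) =
  (2^-1 ^+ n)%:E * leb Kt * leb Kt.
Proof.
move=> cK mK; rewrite integral_mkcond.
under eq_integral do rewrite -lebesgue_tuple_xsection_reflection_pairs.
rewrite integral_measure_xsection; last exact: measurable_reflection_pairs.
under eq_integral do rewrite lebesgue_tuple_ysection_reflection_pairs //.
by rewrite -integral_mkcond integral_cst.
Qed.

End symmetric_part.

Theorem proposition4p1 (R : realType) :
  exists c : R, 0 < c /\
    forall (n : nat) (K : set 'rV[R]_n), (0 < n)%N ->
      convex_body K -> vol K = 1%E ->
      (leb_integral K (tukey_depth (uniform_on K))
         >= (expR (- (c * n%:R)))%:E)%E.
Proof.
exists 2; split => // n K n_gt0 [cK [compK _]] volK.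
have mK : measurable (@row_of_tuple R n @^-1` K).
  apply: measurable_closed_preimage; apply: compact_closed compK.
  exact: norm_hausdorff.
have lebK : lebesgue_tuple n (@row_of_tuple R n @^-1` K) = 1%E.
  by rewrite lebesgue_tupleE.
rewrite /leb_integral (_ : @leb_tuple R n = lebesgue_tuple n); last first.
  by apply/funext => A; rewrite lebesgue_tupleE.
apply: le_trans (ge0_le_integral_nonmeasurable _ _
  (fun x _ => tukey_depth_ge_symmetric_part x mK volK)); last first.
  by move=> x _; rewrite mule_ge0 // lee_fin invr_ge0.
rewrite ge0_integralZr //; last exact: measurable_fun_symmetric_part.
rewrite integral_symmetric_part // lebK !mule1 -EFinM lee_fin -exprSr.
exact: expR_le_halfX.
Qed.
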